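(* Let $G$ be a graph, let $\mathcal{P}=(X_1,\ldots,X_l)$ be a path decomposition of width $k$ of $G$, and let $S\subseteq V(G)$ be such that the number $c$ of $S$-branches satisfies $c>k$. Let $H_1,\ldots,H_c$ be the $S$-branches indexed so that $\alpha(H_1)\leq\cdots\leq\alpha(H_c)$, and let $H^1,\ldots,H^c$ be the $S$-branches indexed so that $\beta(H^1)\leq\cdots\leq\beta(H^c)$. Then (i) $\alpha(H_i)\geq\alpha(x)$ for all $i\geq k+1$ and all $x\in S$; (ii) $\beta(H^i)\leq\beta(x)$ for all $i\leq c-k$ and all $x\in S$.
   Context: A path decomposition of $G$ is a sequence $(X_1,\ldots,X_l)$ of subsets of $V(G)$ covering $V(G)$, such that every edge lies in some $X_i$, and $X_i\cap X_k\subseteq X_j$ whenever $i\leq j\leq k$; its width is $\max_i|X_i|-1$. For a subgraph $H$ (or vertex $v$, viewed as a one-vertex subgraph), $\alpha(H)=\min\{i: X_i\cap V(H)\neq\emptyset\}$ and $\beta(H)=\max\{i: X_i\cap V(H)\neq\emptyset\}$. For $S\subseteq V(G)$, an $S$-component is a connected component $H$ of $G-S$ such that every vertex of $S$ has a neighbor in $V(H)$; an $S$-branch is an $S$-component with at least two vertices. *)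

From mathcomp Require Import all_boot.
Set Implicit Arguments. Unset Strict Implicit. Unset Printing Implicit Defensive.

(* A (simple) graph: vertex set a finType T, adjacency e : rel T
   (assumed symmetric and irreflexive in the theorem).
   A path decomposition is a sequence X of bags; bag i (0-based) is nth set0 X i. *)

Definition bag (T : finType) (X : seq {set T}) (i : nat) : {set T} := nth set0 X i.

Definition is_path_decomposition (T : finType) (e : rel T) (X : seq {set T}) : Prop :=
  [/\ (forall v : T, exists2 i, i < size X & v \in bag X i),
      (forall u v : T, e u v -> exists2 i, i < size X & (u \in bag X i) && (v \in bag X i))
    & (forall i j l, i <= j -> j <= l -> l < size X ->
         bag X i :&: bag X l \subset bag X j)].

Definition pd_width (T : finType) (X : seq {set T}) : nat :=
  (\max_(A <- X) #|A|).-1.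

Definition alpha (T : finType) (X : seq {set T}) (H : {set T}) : nat :=
  find (fun B : {set T} => ~~ [disjoint B & H]) X.

Definition beta (T : finType) (X : seq {set T}) (H : {set T}) : nat :=
  \max_(i < size X | ~~ [disjoint bag X i & H]) (i : nat).

Definition rel_minus (T : finType) (e : rel T) (S : {set T}) : rel T :=
  [rel x y | [&& e x y, x \notin S & y \notin S]].

Definition is_component_minus (T : finType) (e : rel T) (S C : {set T}) : bool :=
  [exists v, (v \notin S) && (C == [set u | connect (rel_minus e S) v u])].

Definition is_S_component (T : finType) (e : rel T) (S C : {set T}) : bool :=
  is_component_minus e S C && [forall x in S, exists y in C, e x y].

Definition is_S_branch (T : finType) (e : rel T) (S C : {set T}) : bool :=
  is_S_component e S C && (1 < #|C|).

Definition S_branches (T : finType) (e : rel T) (S : {set T}) : {set {set T}} :=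
  [set C : {set T} | is_S_branch e S C].

(** An S-branch C is connected and avoids S, so it meets every bag between
    any two bags it meets; it also contains a neighbour of each x in S, so it
    meets some bag at or after alpha(x). Hence, if alpha(C) < alpha(x), then C
    meets the bag X_alpha(x), which also contains x. Distinct branches are
    disjoint and avoid x, so at most |X_alpha(x)| - 1 <= k branches can do so;
    the k+1 branches H_1, ..., H_(k+1) would all do so if alpha(H_i) < alpha(x)
    for some i >= k+1. The statement about beta is symmetric. *)

From mathcomp Require Import all_boot zify.
Set Implicit Arguments. Unset Strict Implicit. Unset Printing Implicit Defensive.

Section PathDecomposition.
Variables (T : finType) (e : rel T) (X : seq {set T}).
Hypothesis hPD : is_path_decomposition e X.

Lemma path_meets_bags_between (r : rel T) (r_sub_e : subrel r e) p u a b m :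
  path r u p -> a <= m -> m <= b -> b < size X ->
  u \in bag X a -> last u p \in bag X b ->
  exists2 z, connect r u z & z \in bag X m.
Proof.
case: hPD => _ hedge hinterp.
elim: p u a => [|y p IHp] u a /= => [_|/andP[ruy ryp]] am mb bX ua ub.
  by exists u => //; apply: (subsetP (hinterp a m b am mb bX)); rewrite inE ua.
have [c cX /andP[uc yc]] := hedge _ _ (r_sub_e _ _ ruy).
case: (leqP m c) => [mc|cm].
  by exists u => //; apply: (subsetP (hinterp a m c am mc cX)); rewrite inE ua.
have [z yz zm] := IHp y c ryp (ltnW cm) mb bX yc ub.
by exists z => //; apply: connect_trans (connect1 ruy) yz.
Qed.

Lemma meets_bag (H : {set T}) v i :
  v \in H -> v \in bag X i -> ~~ [disjoint bag X i & H].
Proof. by move=> vH vi; rewrite -setI_eq0; apply/set0Pn; exists v; rewrite inE vi. Qed.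

Lemma meets_bag_witness (H : {set T}) i :
  ~~ [disjoint bag X i & H] -> exists2 z, z \in H & z \in bag X i.
Proof. by rewrite -setI_eq0 => /set0Pn[z]; rewrite inE => /andP[zi zH]; exists z. Qed.

Lemma alpha_leq (H : {set T}) v i :
  v \in H -> v \in bag X i -> alpha X H <= i.
Proof.
move=> vH vi; rewrite leqNgt; apply/negP => /(before_find set0).
by rewrite -/(bag X i) (meets_bag vH vi).
Qed.

Lemma alpha_meets (H : {set T}) v i : v \in H -> v \in bag X i -> i < size X ->
  alpha X H < size X /\ exists2 z, z \in H & z \in bag X (alpha X H).
Proof.
move=> vH vi iX.
have hasX : has (fun B : {set T} => ~~ [disjoint B & H]) X.
  by apply/hasP; exists (bag X i); [exact: mem_nth | exact: meets_bag vH vi].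
by split; [rewrite -has_find | apply/meets_bag_witness/(nth_find set0 hasX)].
Qed.

Lemma beta_geq (H : {set T}) v i :
  v \in H -> v \in bag X i -> i < size X -> i <= beta X H.
Proof.
move=> vH vi iX.
exact: (@leq_bigmax_cond _ (fun j : 'I_(size X) => ~~ [disjoint bag X j & H])
  (fun j => nat_of_ord j) (Ordinal iX) (meets_bag vH vi)).
Qed.

Lemma beta_meets (H : {set T}) v i : v \in H -> v \in bag X i -> i < size X ->
  beta X H < size X /\ exists2 z, z \in H & z \in bag X (beta X H).
Proof.
move=> vH vi iX.
have meets_i := meets_bag vH vi.
rewrite /beta (bigmax_eq_arg (Ordinal iX) meets_i).
by case: arg_maxnP => // j /meets_bag_witness jH _; split.
Qed.

End PathDecomposition.

Section SBranches.
Variables (T : finType) (e : rel T) (S : {set T}).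
Hypothesis e_sym : symmetric e.

Lemma S_branch_spec C : C \in S_branches e S ->
  [/\ exists2 v, v \notin S & C = [set u | connect (rel_minus e S) v u],
      (forall x, x \in S -> exists2 y, y \in C & e x y) & 1 < #|C|].
Proof.
rewrite inE => /andP[/andP[/existsP[v /andP[vS /eqP->]] /forallP adjS] C2].
split=> //; first by exists v.
by move=> x xS; have /implyP/(_ xS)/existsP[y /andP[yC exy]] := adjS x; exists y.
Qed.

Lemma rel_minus_sym : symmetric (rel_minus e S).
Proof. by move=> a b; rewrite /rel_minus /= e_sym [(b \notin S) && _]andbC. Qed.

Lemma S_branch_notin C z : C \in S_branches e S -> z \in C -> z \notin S.
Proof.
case/S_branch_spec=> [[v vS ->] _ _]; rewrite inE => /connectP[p vp ->] {z}.
by elim: p v vp vS => //= y p IHp v /andP[/and3P[_ _ yS] yp] _; apply: IHp.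
Qed.

Lemma S_branch_eq C C' z : C \in S_branches e S -> C' \in S_branches e S ->
  z \in C -> z \in C' -> C = C'.
Proof.
move=> /S_branch_spec[[v _ ->] _ _] /S_branch_spec[[v' _ ->] _ _].
have csym := sym_connect_sym rel_minus_sym.
rewrite !inE => vz v'z; apply/setP => u; rewrite !inE.
by apply: (same_connect csym); apply: connect_trans vz _; rewrite csym.
Qed.

Lemma S_branch_connected X C u y a b m : is_path_decomposition e X ->
  C \in S_branches e S -> u \in C -> u \in bag X a -> y \in C -> y \in bag X b ->
  a <= m -> m <= b -> b < size X -> exists2 z, z \in C & z \in bag X m.
Proof.
move=> hPD /[dup] CS /S_branch_spec[[v _ defC] _ _] uC ua yC yb am mb bX.
have csym := sym_connect_sym rel_minus_sym.
have /connectP[p up yl] : connect (rel_minus e S) u y.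
  by move: uC yC; rewrite defC !inE => vu; apply: connect_trans; rewrite csym.
have r_sub_e : subrel (rel_minus e S) e by move=> ? ? /andP[].
rewrite yl in yb; have [z uz zm] := path_meets_bags_between hPD r_sub_e up am mb bX ua yb.
exists z => //; move: uC; rewrite defC !inE => vu; exact: connect_trans uz.
Qed.

(* Each branch contributes a vertex of the bag other than x, and these are distinct. *)
Lemma card_S_branches_meeting_bag X n (g : 'I_n -> {set T}) m x :
  m < size X -> x \in S -> x \in bag X m -> injective g ->
  (forall t, g t \in S_branches e S) ->
  (forall t, exists2 z, z \in g t & z \in bag X m) ->
  n <= pd_width X.
Proof.
move=> mX xS xm g_inj g_br g_meet.
pose z t := odflt x [pick y in g t :&: bag X m].
have zP t : z t \in g t :&: bag X m.
  rewrite /z; case: pickP => [y ->|none] //=.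
  by have [y y1 y2] := g_meet t; have := none y; rewrite inE y1 y2.
have z_inj : injective z.
  move=> t1 t2 zt; apply: g_inj; apply: (S_branch_eq (z := z t1) (g_br t1) (g_br t2)).
    by case/setIP: (zP t1).
  by rewrite zt; case/setIP: (zP t2).
have sub_bag : [set z t | t in 'I_n] \subset bag X m :\ x.
  apply/subsetP => _ /imsetP[t _ ->]; have /setIP[zg zm] := zP t.
  rewrite !inE zm andbT; apply: contraNneq (S_branch_notin (g_br t) zg) => ->.
  exact: xS.
have := subset_leq_card sub_bag; rewrite card_imset // card_ord.
have := @leq_bigmax_seq _ X xpredT (fun A : {set T} => #|A|) _ (mem_nth set0 mX) isT.
by have := cardsD1 x (bag X m); rewrite xm /pd_width -/(bag X m) /=; lia.
Qed.

Lemma S_branch_meets_alpha1 X C x : is_path_decomposition e X ->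
  C \in S_branches e S -> x \in S -> alpha X C < alpha X [set x] ->
  exists2 z, z \in C & z \in bag X (alpha X [set x]).
Proof.
move=> /[dup] hPD [cover hedge _] CS xS lt_alpha.
have [_ adjS C2] := S_branch_spec CS.
have [y yC xy] := adjS x xS.
have [r rX /andP[xr yr]] := hedge _ _ xy.
have [u uC] : exists u, u \in C by apply/set0Pn; rewrite -card_gt0 (ltnW C2).
have [i iX ui] := cover u.
have [_ [w wC wa]] := alpha_meets uC ui iX.
apply: (S_branch_connected hPD CS wC wa yC yr (ltnW lt_alpha) _ rX).
by apply: alpha_leq xr; rewrite set11.
Qed.

Lemma S_branch_meets_beta1 X C x : is_path_decomposition e X ->
  C \in S_branches e S -> x \in S -> beta X [set x] < beta X C ->
  exists2 z, z \in C & z \in bag X (beta X [set x]).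
Proof.
move=> /[dup] hPD [cover hedge _] CS xS lt_beta.
have [_ adjS C2] := S_branch_spec CS.
have [y yC xy] := adjS x xS.
have [r rX /andP[xr yr]] := hedge _ _ xy.
have [u uC] : exists u, u \in C by apply/set0Pn; rewrite -card_gt0 (ltnW C2).
have [i iX ui] := cover u.
have [bX [w wC wb]] := beta_meets uC ui iX.
apply: (S_branch_connected hPD CS yC yr wC wb _ (ltnW lt_beta) bX).
by apply: beta_geq xr rX; rewrite set11.
Qed.

End SBranches.

Theorem mainTheorem12 (T : finType) (e : rel T) (X : seq {set T}) (k : nat)
  (S : {set T})
  (e_sym : symmetric e) (e_irr : irreflexive e)
  (hPD : is_path_decomposition e X) (hw : pd_width X = k)
  (hc : k < #|S_branches e S|)
  (Ha Hb : 'I_#|S_branches e S| -> {set T})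
  (Ha_inj : injective Ha) (Ha_br : forall i, Ha i \in S_branches e S)
  (Ha_sort : forall i j : 'I_#|S_branches e S|, i <= j -> alpha X (Ha i) <= alpha X (Ha j))
  (Hb_inj : injective Hb) (Hb_br : forall i, Hb i \in S_branches e S)
  (Hb_sort : forall i j : 'I_#|S_branches e S|, i <= j -> beta X (Hb i) <= beta X (Hb j)) :
  (forall i : 'I_#|S_branches e S|, k <= i ->
     forall x, x \in S -> alpha X [set x] <= alpha X (Ha i)) /\
  (forall i : 'I_#|S_branches e S|, i < #|S_branches e S| - k ->
     forall x, x \in S -> beta X (Hb i) <= beta X [set x]).
Proof.
have [cover _ _] := hPD.
have widen_inj : injective (widen_ord hc) by move=> t1 t2 /(congr1 val) /= /val_inj.
split=> i ik x xS; rewrite leqNgt; apply/negP => lt_x.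
- have [i0 i0X xi0] := cover x.
  have [mX [_ /set1P-> xm]] := alpha_meets (set11 x) xi0 i0X.
  suff : k.+1 <= pd_width X by rewrite hw ltnn.
  apply: (card_S_branches_meeting_bag e_sym mX xS xm (g := fun t => Ha (widen_ord hc t))) => //.
    by move=> t1 t2 /Ha_inj /widen_inj.
  move=> t; apply: (S_branch_meets_alpha1 e_sym hPD (Ha_br _) xS).
  apply: (leq_ltn_trans _ lt_x).
  by apply: Ha_sort; move: (ltn_ord t) ik => /=; lia.
- have [i0 i0X xi0] := cover x.
  have [mX [_ /set1P-> xm]] := beta_meets (set11 x) xi0 i0X.
  suff : k.+1 <= pd_width X by rewrite hw ltnn.
  apply: (card_S_branches_meeting_bag e_sym mX xS xm (g := fun t => Hb (rev_ord (widen_ord hc t)))) => //.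
    by move=> t1 t2 /Hb_inj /rev_ord_inj /widen_inj.
  move=> t; apply: (S_branch_meets_beta1 e_sym hPD (Hb_br _) xS).
  apply: (leq_trans lt_x).
  by apply: Hb_sort; move: (ltn_ord t) ik => /=; lia.
Qed.
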